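(* Under the standing assumptions and definitions in the context, if $\mathbf{x}^r\in\Gamma$, then $\mathbf{x}^r\in\mathcal{F}(\mathbf{x}^r)$ and the interior of $\mathcal{F}(\mathbf{x}^r)$ is nonempty.
   Context: Problem: minimize $J(\mathbf{x})$ over $\mathbf{x}\in\Gamma\subset\mathbb{R}^n$, where (i) $J:\mathbb{R}^n\to\mathbb{R}^+$ is smooth and strictly convex; (ii) $\Gamma$ is connected and closed with piecewise smooth, non-self-intersecting boundary, and every point of $\Gamma$ lies in some $n$-dimensional convex polytope contained in $\Gamma$. Semi-convex decomposition: $\Gamma=\bigcap_{i=1}^N\Gamma_i$, $\Gamma_i=\{\mathbf{x}:\phi_i(\mathbf{x})\ge 0\}$, $\partial\Gamma_i=\{\mathbf{x}:\phi_i(\mathbf{x})=0\}$, where each $\phi_i:\mathbb{R}^n\to\mathbb{R}$ is continuous, piecewise smooth and semi-convex: there is a positive semidefinite $H_i^*$ such that $\mathbf{x}\mapsto\phi_i(\mathbf{x})+\frac12(\mathbf{x}-\mathbf{x}_0)^TH_i^*(\mathbf{x}-\mathbf{x}_0)$ is convex for every $\mathbf{x}_0$. One-sided directional derivative: $\partial_v\phi_i(\mathbf{x})=\lim_{a\to0^+}(\phi_i(\mathbf{x}+av)-\phi_i(\mathbf{x}))/a$. Sub-differential: $D\phi_i(\mathbf{x})=\{d\in\mathbb{R}^n: d\cdot v\le\partial_v\phi_i(\mathbf{x})\ \forall v\in\mathbb{R}^n\}$. It is assumed that: (1) $D\phi_i(\mathbf{x})\neq\{0\}$ for all $\mathbf{x}$;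 (2) $0\notin D\phi_i(\mathbf{x})$ if $\mathbf{x}\in\partial\Gamma_i$; (3) for any $\mathbf{x}$ with $I:=\{i:\phi_i(\mathbf{x})=0\}\ne\emptyset$ there is $v$ with $\partial_v\phi_i(\mathbf{x})<0$ for all $i\in I$. Optimal sub-gradients at a reference $\mathbf{x}^r$: a unit vector $v$ is a feasible search direction if for every $i$: $\phi_i(\mathbf{x}^r)>0$; or $\phi_i(\mathbf{x}^r)=0$ and some $d\in D\phi_i(\mathbf{x}^r)$ has $v\cdot d\ge0$; or $\phi_i(\mathbf{x}^r)<0$ and some $d\in D\phi_i(\mathbf{x}^r)$ has $v\cdot d>0$. Let $C(\mathbf{x}^r)$ be the set of these, and $v^*=\arg\min_{v\in C(\mathbf{x}^r)}\nabla J(\mathbf{x}^r)\cdot v$ (ties broken lexicographically). Let $DF_i=D\phi_i(\mathbf{x}^r)$ if $\phi_i(\mathbf{x}^r)>0$, $DF_i=\{d\in D\phi_i(\mathbf{x}^r):d\cdot v^*\ge0\}$ if $\phi_i(\mathbf{x}^r)=0$, $DF_i=\{d\in D\phi_i(\mathbf{x}^r):d\cdot v^*>0\}$ if $\phi_i(\mathbf{x}^r)<0$, and $\hat\nabla\phi_i(\mathbf{x}^r)=\arg\min_{d\in DF_i}\nabla J(\mathbf{x}^r)\cdot d/\|d\|$ (with $d/\|d\|:=0$ if $d=0$). Convex feasible set: $\mathcal{F}_i(\mathbf{x}^r)=\Gamma_i$ if $\phi_i$ is concave; $\mathcal{F}_i(\mathbf{x}^r)=\{\mathbf{x}:\phi_i(\mathbf{x}^r)+\hat\nabla\phi_i(\mathbf{x}^r)(\mathbf{x}-\mathbf{x}^r)\ge0\}$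 if $\phi_i$ is convex; $\mathcal{F}_i(\mathbf{x}^r)=\{\mathbf{x}:\phi_i(\mathbf{x}^r)+\hat\nabla\phi_i(\mathbf{x}^r)(\mathbf{x}-\mathbf{x}^r)\ge\frac12(\mathbf{x}-\mathbf{x}^r)^TH_i^*(\mathbf{x}-\mathbf{x}^r)\}$ otherwise; $\mathcal{F}(\mathbf{x}^r)=\bigcap_{i=1}^N\mathcal{F}_i(\mathbf{x}^r)$. *)

(* R^n is modelled as 'rV[R]_n. *)
From HB Require Import structures.
From mathcomp Require Import all_boot all_order all_algebra.
From mathcomp Require Import all_classical all_reals all_analysis.
Set Implicit Arguments. Unset Strict Implicit. Unset Printing Implicit Defensive.
Import Order.TTheory GRing.Theory Num.Theory.
Import numFieldNormedType.Exports.
Local Open Scope classical_set_scope.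
Local Open Scope ring_scope.

Section Defs.
Variables (R : realType) (n : nat).
Notation V := 'rV[R]_n.

Definition dot (u v : V) : R := \sum_(k < n) u 0 k * v 0 k.
Definition enorm (u : V) : R := Num.sqrt (dot u u).

Definition quad (H : 'M[R]_n) (w : V) : R := (w *m H *m w^T) 0 0.

Definition psd (H : 'M[R]_n) : Prop := H^T = H /\ forall w : V, 0 <= quad H w.

Definition convex_fun (f : V -> R) : Prop :=
  forall (x y : V) (t : R), 0 <= t <= 1 ->
    f (t *: x + (1 - t) *: y) <= t * f x + (1 - t) * f y.
Definition concave_fun (f : V -> R) : Prop := convex_fun (fun x => - f x).
Definition strictly_convex (f : V -> R) : Prop :=
  forall (x y : V) (t : R), x != y -> 0 < t < 1 ->
    f (t *: x + (1 - t) *: y) < t * f x + (1 - t) * f y.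

Definition semiconvex_with (phi : V -> R) (H : 'M[R]_n) : Prop :=
  psd H /\ forall x0 : V, convex_fun (fun x => phi x + 2^-1 * quad H (x - x0)).

Fixpoint iter_dder (vs : seq V) (f : V -> R) : V -> R :=
  match vs with
  | [::] => f
  | v :: vs' => fun x => derive (iter_dder vs' f) x v
  end.
Definition smooth (f : V -> R) : Prop :=
  forall (vs : seq V) (x : V), differentiable (iter_dder vs f) x.

Definition grad (f : V -> R) (x : V) : V :=
  \row_(k < n) derive f x (delta_mx 0 k).

Definition ddir (f : V -> R) (x v : V) : R :=
  lim ((fun a : R => (f (x + a *: v) - f x) / a) @ 0^'+).

Definition subdiff (f : V -> R) (x : V) : set V :=
  [set d | forall v : V, dot d v <= ddir f x v].

Definition lex_le (u v : V) : Prop :=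
  u = v \/ exists k : 'I_n,
    (forall j : 'I_n, (j < k)%N -> u 0 j = v 0 j) /\ u 0 k < v 0 k.

Variable N : nat.
Variable phi : 'I_N -> V -> R.

Definition Gamma_i (i : 'I_N) : set V := [set x | 0 <= phi i x].
Definition Gamma : set V := [set x | forall i, 0 <= phi i x].

Definition topo_boundary (A : set V) : set V := closure A `\` A°.

Definition conv_hull (m : nat) (p : 'I_m -> V) : set V :=
  [set y | exists w : 'I_m -> R, (forall k, 0 <= w k) /\
     \sum_(k < m) w k = 1 /\ y = \sum_(k < m) w k *: p k].

Definition polytope_covered (G : set V) : Prop :=
  forall x, G x -> exists (m : nat) (p : 'I_m -> V),
    conv_hull p x /\ conv_hull p `<=` G /\ (conv_hull p)° !=set0.

Definition assumption1 : Prop :=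
  forall i x, subdiff (phi i) x <> [set 0].
Definition assumption2 : Prop :=
  forall i x, phi i x = 0 -> ~ subdiff (phi i) x 0.
Definition assumption3 : Prop :=
  forall x, (exists i, phi i x = 0) ->
    exists v : V, forall i, phi i x = 0 -> ddir (phi i) x v < 0.

Definition feas_dirs (xr : V) : set V :=
  [set v | enorm v = 1 /\ forall i,
     0 < phi i xr
     \/ (phi i xr = 0 /\ exists2 d, subdiff (phi i) xr d & 0 <= dot v d)
     \/ (phi i xr < 0 /\ exists2 d, subdiff (phi i) xr d & 0 < dot v d)].

Definition is_vstar (g xr vstar : V) : Prop :=
  feas_dirs xr vstar /\
  forall v, feas_dirs xr v ->
    dot g vstar <= dot g v /\ (dot g vstar = dot g v -> lex_le vstar v).

Definition DF (xr vstar : V) (i : 'I_N) : set V :=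
  [set d | subdiff (phi i) xr d /\
     (0 < phi i xr
      \/ (phi i xr = 0 /\ 0 <= dot d vstar)
      \/ (phi i xr < 0 /\ 0 < dot d vstar))].

(* hat-grad phi_i = argmin_{d in DF_i} g.d/|d|  (with d/|d| := 0 for d = 0;
   note x / 0 = 0 in MathComp) *)
Definition is_dhat (g xr vstar : V) (i : 'I_N) (dh : V) : Prop :=
  DF xr vstar i dh /\
  forall d, DF xr vstar i d -> dot g dh / enorm dh <= dot g d / enorm d.

Variable H : 'I_N -> 'M[R]_n.

(* F_i(x^r), with the case order of the paper: concave, else convex, else *)
Definition Fi (xr : V) (dhat : 'I_N -> V) (i : 'I_N) : set V :=
  [set x |
     (concave_fun (phi i) -> 0 <= phi i x) /\
     (~ concave_fun (phi i) -> convex_fun (phi i) ->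
        0 <= phi i xr + dot (dhat i) (x - xr)) /\
     (~ concave_fun (phi i) -> ~ convex_fun (phi i) ->
        2^-1 * quad (H i) (x - xr) <= phi i xr + dot (dhat i) (x - xr))].

Definition Ffeas (xr : V) (dhat : 'I_N -> V) : set V :=
  [set x | forall i, Fi xr dhat i x].

End Defs.

From HB Require Import structures.
From mathcomp Require Import all_boot all_order all_algebra.
From mathcomp Require Import all_classical all_reals all_analysis.
From mathcomp Require Import ring lra.
Import Order.TTheory GRing.Theory Num.Theory.
Import numFieldNormedType.Exports.
Local Open Scope classical_set_scope.
Local Open Scope ring_scope.

(* If every phi_i is concave, F(x^r) is Gamma, which contains a ball since x^r
   lies in a full-dimensional polytope inside Gamma.  Otherwise the feasibility
   of v^* provides a subgradient at every active constraint, and assumption (3)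
   yields a direction u with d.u > 0 for each of them (in particular for
   hat-grad phi_i) and with positive one-sided derivative of every active phi_i.
   Take a ball B(z, r) in Gamma and y = x^r + s (u + k (z - x^r)) with k, then
   s, small.  For non-concave phi_i the linearised and quadratic constraints are
   continuous and positive at y; for concave phi_i the set Gamma_i is convex and
   contains B(z, r) and a segment [x^r, x^r + T u], hence a ball around y. *)

Section RealNear.
Local Set Implicit Arguments.
Local Unset Strict Implicit.
Variable R : realType.

Lemma near0_poly_gt0 (p a b : R) : 0 <= p -> (p = 0 -> 0 < a) ->
  \forall s \near 0^'+, 0 < p + s * (a - s * b).
Proof.
have affine_cont : {for 0, continuous (fun s : R => a - s * b)}.
  apply: continuousB; first exact: cst_continuous.
  by apply: continuousM; [exact: cvg_id | exact: cst_continuous].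
have near0_gt0 (f : R -> R) : {for 0, continuous f} -> 0 < f 0 ->
    \forall s \near 0^'+, 0 < f s.
  by move=> fc f0; apply: cvg_within; exact: cvgr_gt fc _ f0.
rewrite le_eqVlt => /orP[/eqP p0 /(_ (esym p0))|p_gt0 _].
- rewrite -p0 => a_gt0.
  have := near0_gt0 _ affine_cont; rewrite mul0r subr0 => /(_ a_gt0) near_a.
  near=> s; rewrite add0r; apply: mulr_gt0; last by near: s.
  by near: s; exact: nbhs_right_gt.
- apply: near0_gt0; last by rewrite mul0r addr0.
  apply: continuousD; first exact: cst_continuous.
  by apply: continuousM; [exact: cvg_id | exact: affine_cont].
Unshelve. all: by end_near.
Qed.

End RealNear.

Section ConvexBall.
Local Set Implicit Arguments.
Local Unset Strict Implicit.
Variables (R : realType) (V : normedModType R).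

Lemma convex_ball_comb (C : set V) (p z : V) (r l : R) :
  (forall a b t, C a -> C b -> 0 <= t <= 1 -> C (t *: a + (1 - t) *: b)) ->
  ball z r `<=` C -> C p -> 0 < l <= 1 ->
  ball ((1 - l) *: p + l *: z) (l * r) `<=` C.
Proof.
move=> convC zrC Cp /andP[l_gt0 l_le1] x.
rewrite -ball_normE /ball_ /= => x_near.
pose b := z + l^-1 *: (x - ((1 - l) *: p + l *: z)).
have -> : x = (1 - l) *: p + (1 - (1 - l)) *: b.
  rewrite opprB addrCA subrr addr0 /b scalerDr scalerA divff ?gt_eqF //.
  by rewrite scale1r addrA addrC subrK.
apply: convC => //; last by apply/andP; split; lra.
apply: zrC; rewrite -ball_normE /ball_ /= /b opprD addNKr normrN normrZ.
by rewrite ger0_norm ?invr_ge0 ?ltW // -normrN opprB mulrC ltr_pdivrMr // mulrC.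
Qed.

End ConvexBall.

Section Rn.
Local Set Implicit Arguments.
Local Unset Strict Implicit.
Variables (R : realType) (n : nat).
Notation V := 'rV[R]_n.

Lemma dotD (d a b : V) : dot d (a + b) = dot d a + dot d b.
Proof. rewrite /dot -big_split /=; apply: eq_bigr => k _; rewrite mxE; ring. Qed.

Lemma dotZ (d a : V) (s : R) : dot d (s *: a) = s * dot d a.
Proof. rewrite /dot mulr_sumr; apply: eq_bigr => k _; rewrite mxE; ring. Qed.

Lemma dotN (d a : V) : dot d (- a) = - dot d a.
Proof. by rewrite -scaleN1r dotZ mulN1r. Qed.

Lemma dot0 (d : V) : dot d 0 = 0.
Proof. by rewrite -(scale0r (0 : V)) dotZ mul0r. Qed.

Lemma quadE (H : 'M[R]_n) (w : V) :
  quad H w = \sum_(j < n) (\sum_(k < n) w 0 k * H k j) * w 0 j.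
Proof. by rewrite /quad mxE; apply: eq_bigr => j _; rewrite !mxE. Qed.

Lemma quadZ (H : 'M[R]_n) (w : V) (s : R) : quad H (s *: w) = s ^+ 2 * quad H w.
Proof.
rewrite !quadE mulr_sumr; apply: eq_bigr => j _.
rewrite !mxE !big_distrl /= mulr_sumr; apply: eq_bigr => k _; rewrite !mxE; ring.
Qed.

Lemma quad0 (H : 'M[R]_n) : quad H 0 = 0.
Proof. by rewrite -(scale0r (0 : V)) quadZ expr2 !mul0r. Qed.

Let sum_continuous (F : 'I_n -> V -> R) :
  (forall k, continuous (F k)) -> continuous (fun x => \sum_(k < n) F k x).
Proof. by move=> Fc; apply: continuous_big => //; exact: add_continuous. Qed.

Lemma dot_continuous (d : V) : continuous (dot d).
Proof.
apply: sum_continuous => k x.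
by apply: continuousM; [exact: cst_continuous | exact: coord_continuous].
Qed.

Lemma quad_continuous (H : 'M[R]_n) : continuous (quad H).
Proof.
have -> : quad H = fun w => \sum_(j < n) (\sum_(k < n) w 0 k * H k j) * w 0 j.
  by apply/funext => w; rewrite quadE.
apply: sum_continuous => j x; apply: continuousM; last exact: coord_continuous.
apply: (@sum_continuous (fun k w => w 0 k * H k j)) => k y.
by apply: continuousM; [exact: coord_continuous | exact: cst_continuous].
Qed.

Lemma concave_ge0_comb (f : V -> R) (a b : V) (t : R) :
  concave_fun f -> 0 <= f a -> 0 <= f b -> 0 <= t <= 1 ->
  0 <= f (t *: a + (1 - t) *: b).
Proof.
move=> concf fa fb t01; have := concf a b t t01; case/andP: t01 => t0 t1.
have : 0 <= t * f a + (1 - t) * f b by rewrite addr_ge0 // mulr_ge0 // subr_ge0.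
lra.
Qed.

Lemma concave_slope_nonincreasing (f : V -> R) (x u : V) : concave_fun f ->
  {in `]0, +oo[ &, nonincreasing_fun (fun a => (f (x + a *: u) - f x) / a)}.
Proof.
move=> concf a b; rewrite !in_itv /= !andbT => a_gt0 b_gt0 ab.
have ab01 : 0 <= a / b <= 1.
  by rewrite divr_ge0 ?(ltW a_gt0) ?(ltW b_gt0) //= ler_pdivrMr // mul1r.
have := concf (x + b *: u) x (a / b) ab01.
have -> : (a / b) *: (x + b *: u) + (1 - a / b) *: x = x + a *: u.
  rewrite scalerDr scalerA divfK ?gt_eqF // addrAC -scalerDl.
  by rewrite [a / b + _]addrC subrK scale1r.
rewrite ler_pdivlMr // mulrAC -mulrA mulrC; move: ab01; nra.
Qed.

Lemma concave_ddir_gt0 (f : V -> R) (x u : V) :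
  concave_fun f -> 0 < ddir f x u -> exists2 t, 0 < t & f x <= f (x + t *: u).
Proof.
move=> concf ddir_gt0.
have [//|descent] := pselect (exists2 t, 0 < t & f x <= f (x + t *: u)).
have slope_lt0 t : 0 < t -> (f (x + t *: u) - f x) / t < 0.
  move=> t_gt0; rewrite pmulr_llt0 ?invr_gt0 // subr_lt0 ltNge.
  by apply/negP => le_ft; apply: descent; exists t.
have ub : has_ubound ((fun a => (f (x + a *: u) - f x) / a) @` `]0, +oo[).
  exists 0 => _ [a /= a_pos <-]; apply/ltW/slope_lt0.
  by move: a_pos; rewrite in_itv /= andbT.
have slope_cvg := nonincreasing_at_right_cvgr (a := 0) (b := +oo%O) isT
  (concave_slope_nonincreasing x u concf) ub.
exfalso; move: ddir_gt0; apply/negP; rewrite -leNgt; apply: limr_le; first exact: cvgP slope_cvg.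
near=> a; apply/ltW/slope_lt0; near: a; exact: nbhs_right_gt.
Unshelve. all: by end_near.
Qed.

Lemma concave_ray_ge0 (f : V -> R) (x u : V) :
  concave_fun f -> continuous f -> 0 <= f x -> (f x = 0 -> 0 < ddir f x u) ->
  exists2 T, 0 < T & forall t, 0 <= t <= T -> 0 <= f (x + t *: u).
Proof.
move=> concf fcont fx_ge0 ddir_gt0.
have [T T_gt0 fT_ge0] : exists2 T, 0 < T & 0 <= f (x + T *: u).
  move: fx_ge0; rewrite le_eqVlt => /orP[/eqP fx0 | fx_gt0].
    have [T T_gt0 le_fT] := concave_ddir_gt0 concf (ddir_gt0 (esym fx0)).
    by exists T; rewrite // fx0.
  have ray_cvg : f (x + t *: u) @[t --> 0^'+] --> f x.
    apply: cvg_at_right_filter; rewrite -{2}[x]addr0 -(scale0r u).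
    apply: continuous_comp; last exact: fcont.
    apply: continuousD; first exact: cst_continuous.
    by apply: continuousZr_tmp; exact: cvg_id.
  have : \forall t \near 0^'+, 0 < t /\ 0 < f (x + t *: u).
    near=> t; split; first by near: t; exact: nbhs_right_gt.
    by near: t; exact: cvgr_gt ray_cvg _ fx_gt0.
  by case/filter_ex => T [T_gt0 /ltW]; exists T.
exists T => // t /andP[t_ge0 t_le]; have tT01 : 0 <= t / T <= 1.
  by rewrite divr_ge0 ?(ltW T_gt0) //= ler_pdivrMr // mul1r.
have := concave_ge0_comb concf fT_ge0 fx_ge0 tT01.
rewrite scalerDr scalerA divfK ?gt_eqF // addrAC -scalerDl.
by rewrite [t / T + _]addrC subrK scale1r.
Unshelve. all: by end_near.
Qed.

Lemma dot_gt0_near (d u w : V) : 0 < dot d u ->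
  \forall k \near 0^'+, 0 < dot d (u + k *: w).
Proof.
move=> du_gt0; have du_neq0 : dot d u = 0 -> 0 < dot d w.
  by move=> du0; move: du_gt0; rewrite du0 ltxx.
apply: filterS (near0_poly_gt0 0 (ltW du_gt0) du_neq0) => k.
by rewrite mulr0 subr0 dotD dotZ.
Qed.

Lemma subdiff_dot_opp_gt0 (f : V -> R) (x d v : V) :
  subdiff f x d -> ddir f x v < 0 -> 0 < dot d (- v).
Proof. by move=> sd; rewrite dotN oppr_gt0; exact: le_lt_trans (sd v). Qed.

Lemma subdiff_ddir_opp_gt0 (f : V -> R) (x d v : V) :
  subdiff f x d -> ddir f x v < 0 -> 0 < ddir f x (- v).
Proof. by move=> sd /(subdiff_dot_opp_gt0 sd) /lt_le_trans; apply. Qed.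

Lemma concave_superlevel_interior_near (f : V -> R) (x z u : V) (r k T : R) :
  concave_fun f -> 0 < r -> ball z r `<=` [set y | 0 <= f y] -> 0 < k ->
  0 < T -> (forall t, 0 <= t <= T -> 0 <= f (x + t *: u)) ->
  \forall s \near 0^'+, [set y | 0 <= f y]° (x + s *: (u + k *: (z - x))).
Proof.
move=> concf r_gt0 zrC k_gt0 T_gt0 rayC.
have C_convex a b t : 0 <= f a -> 0 <= f b -> 0 <= t <= 1 ->
    0 <= f (t *: a + (1 - t) *: b).
  exact: concave_ge0_comb.
near=> s.
have s_gt0 : 0 < s by near: s; exact: nbhs_right_gt.
have sk_lt : s * k < 2^-1.
  by rewrite -ltr_pdivlMr //; near: s; apply: nbhs_right_lt; rewrite divr_gt0.
have sT_lt : s < T / 2 by near: s; apply: nbhs_right_lt; rewrite divr_gt0.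
(* l < 1/2 makes tau < 2 s < T. *)
pose l := s * k; pose tau := s / (1 - l).
have l_gt0 : 0 < l by rewrite mulr_gt0.
have l_lt : l < 2^-1 by [].
have tau_ray : 0 <= tau <= T.
  apply/andP; split; first by rewrite divr_ge0 ?subr_ge0; lra.
  by rewrite ler_pdivrMr; nra.
have -> : x + s *: (u + k *: (z - x)) = (1 - l) *: (x + tau *: u) + l *: z.
  apply/rowP => j; rewrite /tau /l !mxE; field.
  by rewrite subr_eq0 gt_eqF //; lra.
apply/nbhs_ballP; exists (l * r); first exact: mulr_gt0.
apply: (convex_ball_comb (C := [set y | 0 <= f y]) C_convex zrC (rayC _ tau_ray)).
by rewrite l_gt0 /l; lra.
Unshelve. all: by end_near.
Qed.

End Rn.

Section FeasibleSet.
Local Set Implicit Arguments.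
Local Unset Strict Implicit.
Variables (R : realType) (n N : nat).
Variables (phi : 'I_N -> 'rV[R]_n -> R) (H : 'I_N -> 'M[R]_n).
Variables (xr : 'rV[R]_n) (dhat : 'I_N -> 'rV[R]_n).
Notation V := 'rV[R]_n.

Lemma polytope_covered_ball (G : set V) (x : V) :
  polytope_covered G -> G x -> exists z, exists2 r, 0 < r & ball z r `<=` G.
Proof.
move=> /(_ x) covG /covG [m [p [_ [hullG [z /nbhs_ballP [r r_gt0 zr_hull]]]]]].
by exists z, r => // y /zr_hull /hullG.
Qed.

Lemma feas_dirs_subdiff (v : V) (i : 'I_N) :
  feas_dirs phi xr v -> phi i xr = 0 -> exists d, subdiff (phi i) xr d.
Proof.
move=> [_ /(_ i)] + act; rewrite act ltxx.
by case=> [//|[[_ [d sd _]]|[//]]]; exists d.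
Qed.

Lemma active_descent_dir : assumption3 phi ->
  exists v : V, forall i, phi i xr = 0 -> ddir (phi i) xr v < 0.
Proof.
move=> A3; have [/A3 //|no_active] := pselect (exists i, phi i xr = 0).
by exists 0 => i act; exfalso; apply: no_active; exists i.
Qed.

Hypothesis Gxr : Gamma phi xr.

Lemma Ffeas_reference : Ffeas phi H xr dhat xr.
Proof.
move=> i; split; first by move=> _; exact: Gxr.
by rewrite subrr dot0 quad0 mulr0 addr0; split=> _ _; exact: Gxr.
Qed.

Lemma Fi_concave (i : 'I_N) (x : V) :
  concave_fun (phi i) -> 0 <= phi i x -> Fi phi H xr dhat i x.
Proof. by move=> conc phix; split=> // [[]]. Qed.

Lemma Fi_interior_nonconcave (i : 'I_N) (y : V) : ~ concave_fun (phi i) ->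
  0 < phi i xr + dot (dhat i) (y - xr) ->
  0 < phi i xr + dot (dhat i) (y - xr) - 2^-1 * quad (H i) (y - xr) ->
  (Fi phi H xr dhat i)° y.
Proof.
move=> nconc lin_gt0 quad_gt0.
have shift_cont (g : V -> R) : continuous g -> continuous (fun x : V => g (x - xr)).
  move=> gc x; apply: continuous_comp; last exact: gc.
  by apply: continuousB; [exact: cvg_id | exact: cst_continuous].
have lin_cont : {for y, continuous (fun x : V => phi i xr + dot (dhat i) (x - xr))}.
  apply: continuousD; first exact: cst_continuous.
  exact: shift_cont (@dot_continuous _ _ (dhat i)) y.
have quad_cont : {for y, continuous (fun x : V =>
    phi i xr + dot (dhat i) (x - xr) - 2^-1 * quad (H i) (x - xr))}.
  apply: continuousB; first exact: lin_cont.
  apply: continuousM; first exact: cst_continuous.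
  exact: shift_cont (@quad_continuous _ _ (H i)) y.
near=> x; split; first by move/nconc.
split=> _ _; first by apply: ltW; near: x; exact: cvgr_gt lin_cont _ lin_gt0.
have : 0 < phi i xr + dot (dhat i) (x - xr) - 2^-1 * quad (H i) (x - xr).
  by near: x; exact: cvgr_gt quad_cont _ quad_gt0.
lra.
Unshelve. all: by end_near.
Qed.

Lemma Fi_interior_near_nonconcave (i : 'I_N) (w : V) : ~ concave_fun (phi i) ->
  (phi i xr = 0 -> 0 < dot (dhat i) w) ->
  \forall s \near 0^'+, (Fi phi H xr dhat i)° (xr + s *: w).
Proof.
move=> nconc lead_gt0.
have lin_near := near0_poly_gt0 0 (Gxr i) lead_gt0.
have quad_near := near0_poly_gt0 (2^-1 * quad (H i) w) (Gxr i) lead_gt0.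
near=> s.
have lin_gt0 : 0 < phi i xr + s * (dot (dhat i) w - s * 0) by near: s.
have quad_gt0 : 0 < phi i xr + s * (dot (dhat i) w - s * (2^-1 * quad (H i) w)).
  by near: s.
have shift : xr + s *: w - xr = s *: w by rewrite addrAC subrr add0r.
apply: Fi_interior_nonconcave => //; rewrite shift dotZ.
  by rewrite mulr0 subr0 in lin_gt0.
by rewrite quadZ; move: quad_gt0; congr (0 < _); ring.
Unshelve. all: by end_near.
Qed.

Lemma Fi_interior_near_concave (i : 'I_N) (z u : V) (r k : R) :
  continuous (phi i) -> concave_fun (phi i) ->
  0 < r -> ball z r `<=` Gamma phi -> 0 < k ->
  (phi i xr = 0 -> 0 < ddir (phi i) xr u) ->
  \forall s \near 0^'+, (Fi phi H xr dhat i)° (xr + s *: (u + k *: (z - xr))).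
Proof.
move=> phi_cont conc r_gt0 zrG k_gt0 ddir_gt0.
have [T T_gt0 rayT] := concave_ray_ge0 conc phi_cont (Gxr i) ddir_gt0.
have zr_i : ball z r `<=` [set y | 0 <= phi i y] by move=> y /zrG /(_ i).
have := concave_superlevel_interior_near conc r_gt0 zr_i k_gt0 T_gt0 rayT.
by apply: filterS => s; apply: filterS => x; exact: Fi_concave.
Qed.

Lemma Ffeas_interior_nonempty (z u : V) (r : R) :
  (forall i, continuous (phi i)) -> 0 < r -> ball z r `<=` Gamma phi ->
  (forall i, phi i xr = 0 -> concave_fun (phi i) -> 0 < ddir (phi i) xr u) ->
  (forall i, phi i xr = 0 -> ~ concave_fun (phi i) -> 0 < dot (dhat i) u) ->
  (Ffeas phi H xr dhat)° !=set0.
Proof.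
move=> phi_cont r_gt0 zrG ddir_gt0 dot_gt0.
have /filter_ex[k [k_gt0 dir_gt0]] : \forall k \near 0^'+, 0 < k /\
    forall i, phi i xr = 0 -> ~ concave_fun (phi i) ->
    0 < dot (dhat i) (u + k *: (z - xr)).
  near=> k; split; first by near: k; exact: nbhs_right_gt.
  near: k; apply: filter_forall => i.
  have [[act nconc]|not_both] := pselect (phi i xr = 0 /\ ~ concave_fun (phi i)).
    by apply: filterS (dot_gt0_near (z - xr) (dot_gt0 i act nconc)) => k ? _ _.
  by near=> k => act nconc; exfalso; apply: not_both.
have : \forall s \near 0^'+,
    forall i, (Fi phi H xr dhat i)° (xr + s *: (u + k *: (z - xr))).
  apply: filter_forall => i; have [conc|nconc] := pselect (concave_fun (phi i)).
    exact: Fi_interior_near_concave (phi_cont i) conc r_gt0 zrG k_gt0 (ddir_gt0 i ^~ conc).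
  exact: Fi_interior_near_nonconcave nconc (dir_gt0 i ^~ nconc).
case/filter_ex => s Fs; exists (xr + s *: (u + k *: (z - xr))).
exact: (@filter_forall _ _ (Fi phi H xr dhat) _ _ Fs).
Unshelve. all: by end_near.
Qed.

End FeasibleSet.

Theorem lemma4p2 (R : realType) (n N : nat)
  (J : 'rV[R]_n -> R) (phi : 'I_N -> 'rV[R]_n -> R) (H : 'I_N -> 'M[R]_n)
  (xr vstar : 'rV[R]_n) (dhat : 'I_N -> 'rV[R]_n) :
  (* (i) J : R^n -> R^+ smooth and strictly convex *)
  smooth J -> (forall x, 0 <= J x) -> strictly_convex J ->
  (* (ii) Gamma connected, closed, covered by n-dimensional convex polytopes *)
  closed (Gamma phi) -> connected (Gamma phi) -> polytope_covered (Gamma phi) ->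
  (* semi-convex decomposition *)
  (forall i, continuous (phi i)) ->
  (forall i, semiconvex_with (phi i) (H i)) ->
  (forall i, topo_boundary (Gamma_i phi i) = [set x | phi i x = 0]) ->
  assumption1 phi -> assumption2 phi -> assumption3 phi ->
  (* reference point and optimal sub-gradients *)
  Gamma phi xr ->
  (forall i, ~ concave_fun (phi i) ->
     is_vstar phi (grad J xr) xr vstar /\
     is_dhat phi (grad J xr) xr vstar i (dhat i)) ->
  Ffeas phi H xr dhat xr /\ (Ffeas phi H xr dhat)° !=set0.
Proof.
(* Neither J nor semi-convexity, closedness, connectedness or assumptions (1)-(2)
   play a role here. *)
move=> _ _ _ _ _ polyG phi_cont _ _ _ _ A3 Gxr sel.
split; first exact: Ffeas_reference.
have [z [r r_gt0 zrG]] := polytope_covered_ball polyG Gxr.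
have [allconc|/existsNP[i0 nconc0]] := pselect (forall i, concave_fun (phi i)).
  exists z; apply/nbhs_ballP; exists r => // y /zrG Gy i.
  exact: Fi_concave (allconc i) (Gy i).
have [[vfeas _] _] := sel i0 nconc0.
have [v descent] := active_descent_dir xr A3.
apply: (Ffeas_interior_nonempty H Gxr (u := - v) phi_cont r_gt0 zrG).
  move=> i act _; have [d sd] := feas_dirs_subdiff vfeas act.
  exact: subdiff_ddir_opp_gt0 sd (descent i act).
move=> i act nconc; have [_ [[sd _] _]] := sel i nconc.
exact: subdiff_dot_opp_gt0 sd (descent i act).
Qed.
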